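(* Let $G$ be a graph, let $\langle \mathcal{P}, T\rangle$ be a VPT representation of $G$, let $C$ be a clique of $G$ and let $q\in V(T)$ with $C=C_q$. If $d_T(q)=h$, then the branch graph $B(G/C)$ is $h$-colorable.
   Context: All graphs are finite, simple and connected. A clique is a maximal complete set of vertices. A VPT representation $\langle \mathcal{P},T\rangle$ of a graph $G$ is a family $\mathcal{P}=(P_v)_{v\in V(G)}$ of subpaths of a tree $T$ such that two distinct vertices $v,v'$ of $G$ are adjacent iff $P_v$ and $P_{v'}$ share at least one vertex. For $q\in V(T)$, $C_q=\{v\in V(G): q\in V(P_v)\}$. For a clique $C$ of $G$, the branch graph $B(G/C)$ has vertex set the vertices of $V(G)\setminus C$ adjacent to some vertex of $C$, and two such vertices $v,w$ are adjacent in $B(G/C)$ iff (1) $vw\notin E(G)$; (2) some vertex of $C$ is adjacent to both $v$ and $w$; and (3) there exist $v',w'\in C$ with $v'$ adjacent to $v$ but not to $w$, and $w'$ adjacent to $w$ but not to $v$. A graph is $k$-colorable if its vertices can be colored with at most $k$ colors so that adjacent vertices get different colors. *)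

From mathcomp Require Import all_boot.
Set Implicit Arguments.
Unset Strict Implicit.
Unset Printing Implicit Defensive.

Definition simple_graph (V : finType) (e : rel V) : Prop :=
  symmetric e /\ irreflexive e.

Definition connected_graph (V : finType) (e : rel V) : Prop :=
  forall x y : V, connect e x y.

Definition graph (V : finType) (e : rel V) : Prop :=
  simple_graph e /\ connected_graph e.

Definition acyclic (W : finType) (e : rel W) : Prop :=
  forall s : seq W, uniq s -> 3 <= size s -> ~ cycle e s.

Definition tree (W : finType) (e : rel W) : Prop :=
  graph e /\ acyclic e.

Definition is_path (W : finType) (e : rel W) (s : seq W) : Prop :=
  exists x p, s = x :: p /\ uniq s /\ path e x p.

Definition VPT_rep (V W : finType) (eG : rel V) (eT : rel W)
  (P : V -> seq W) : Prop :=
  tree eT /\ (forall v, is_path eT (P v)) /\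
  (forall v v' : V, v != v' -> (eG v v' <-> exists q, (q \in P v) && (q \in P v'))).

Definition Cq (V W : finType) (P : V -> seq W) (q : W) : {set V} :=
  [set v | q \in P v].

Definition complete (V : finType) (e : rel V) (C : {set V}) : Prop :=
  forall x y, x \in C -> y \in C -> x != y -> e x y.

Definition clique (V : finType) (e : rel V) (C : {set V}) : Prop :=
  complete e C /\ (forall D : {set V}, complete e D -> C \subset D -> D = C).

Definition branch_vertex (V : finType) (e : rel V) (C : {set V}) (v : V) : bool :=
  (v \notin C) && [exists c in C, e v c].

Definition branch_adj (V : finType) (e : rel V) (C : {set V}) (v w : V) : bool :=
  [&& branch_vertex e C v, branch_vertex e C w,
      ~~ e v w,
      [exists c in C, e c v && e c w],
      [exists v' in C, e v' v && ~~ e v' w] &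
      [exists w' in C, e w' w && ~~ e w' v]].

Definition degree (W : finType) (e : rel W) (q : W) : nat := #|[set r | e q r]|.

Definition branch_colorable (V : finType) (e : rel V) (C : {set V}) (k : nat) : Prop :=
  exists f : V -> nat,
    (forall v, branch_vertex e C v -> f v < k) /\
    (forall v w, branch_adj e C v w -> f v != f w).

From mathcomp Require Import all_boot zify.
Set Implicit Arguments.
Unset Strict Implicit.
Unset Printing Implicit Defensive.

(* A vertex v of B(G/C) has q outside its path P_v, so P_v
   lies in a single component of T - q; these components are in bijection
   with the h neighbours of q, and v is coloured by the neighbour r of q
   whose component contains P_v.  The colouring is proper: if v, w are
   adjacent in B(G/C), take c in C adjacent to both, meeting P_v at y_v and
   P_w at y_w.  The three distinct vertices q, y_v, y_w lie on the path
   P_c, and in a tree the middle one of three vertices of a path separates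
   the other two.  Neither y_v nor y_w can be in the middle, because the
   witnesses w' (resp. v') of condition (3) give a walk from q to y_w
   avoiding y_v (resp. from q to y_v avoiding y_w); hence q separates y_v
   from y_w, i.e. P_v and P_w lie in different components of T - q. *)

Definition del_vertex (W : finType) (e : rel W) (z : W) : rel W :=
  fun x y => [&& e x y, x != z & y != z].

Section TreeSeparation.

Variables (W : finType) (e : rel W).
Hypothesis e_sym : symmetric e.

Lemma del_vertex_connect_sym z : connect_sym (del_vertex e z).
Proof.
by apply: sym_connect_sym => x y; rewrite /del_vertex e_sym (andbC (x != z)).
Qed.

Lemma path_del_vertex z x p :
  path e x p -> z \notin x :: p -> path (del_vertex e z) x p.
Proof.
move=> exp z_out; apply: (sub_in_path (P := predC1 z)) exp; last first.
  by apply/allP => y y_in; apply: contraNneq z_out => <-.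
by move=> a b; rewrite !inE /del_vertex => -> -> ->.
Qed.

Lemma connect_along_path z x p a b :
  path e x p -> z \notin x :: p -> a \in x :: p -> b \in x :: p ->
  connect (del_vertex e z) a b.
Proof.
move=> exp z_out a_in b_in.
have ezp := path_del_vertex exp z_out.
apply: (connect_trans (y := x)); last exact: (path_connect ezp b_in).
by rewrite del_vertex_connect_sym; exact: (path_connect ezp a_in).
Qed.

Lemma connect_along_is_path z s a b :
  is_path e s -> z \notin s -> a \in s -> b \in s -> connect (del_vertex e z) a b.
Proof. by case=> x [p [-> [_ exp]]]; apply: connect_along_path. Qed.

Lemma head_is_path_mem s x0 : is_path e s -> head x0 s \in s.
Proof. by case=> x [p [-> _]]; rewrite inE eqxx. Qed.

Hypothesis e_acyc : acyclic e.

(* In an acyclic graph two distinct neighbours of z are disconnected in e - z: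
   a walk between them would close a cycle through z. *)
Lemma neighbours_separated z r1 r2 :
  e z r1 -> e z r2 -> r1 != r2 -> ~ connect (del_vertex e z) r1 r2.
Proof.
move=> ezr1 ezr2 r12 /connectP[p0 p0_path p0_last].
case/shortenP: p0_path p0_last => [[|y p] rp up _ /= p_last].
  by rewrite p_last eqxx in r12.
have /andP[/and3P[_ r1z _] _] := rp.
have avoid_z : all (predC1 z) (y :: p).
  have avoid b t : path (del_vertex e z) b t -> all (predC1 z) t.
    by elim: t b => //= a t IH b /andP[/and3P[_ _ ->] /IH].
  exact: avoid rp.
apply: (e_acyc (s := [:: z, r1, y & p])) => //.
- apply/andP; split; last exact: up.
  rewrite inE negb_or eq_sym r1z /=.
  by apply/negP => /(allP avoid_z); rewrite /= eqxx.
- rewrite /cycle -cat1s -/(rcons _ z) rcons_path /= -p_last (e_sym r2) ezr1 ezr2 andbT.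
  by apply: sub_path rp => a b /and3P[].
Qed.

(* An inner vertex b of a path separates the part before b from the part
   after b, since the two neighbours of b on the path are separated. *)
Lemma cut_vertex_separates s1 b s2 a c :
  is_path e (s1 ++ b :: s2) -> a \in s1 -> c \in s2 ->
  ~ connect (del_vertex e b) a c.
Proof.
case: s1 => [//|x t1]; case: s2 => [//|y t2].
case=> _ [_ [[<- <-] [s_uniq s_path]]] a_in c_in ac.
move: s_path; rewrite cat_path /= => /and4P[left_path lb_edge by_edge right_path].
move: s_uniq; rewrite cat_uniq => /and3P[_ /hasPn sep /andP[b_right _]].
have b_left : b \notin x :: t1 by apply: sep; rewrite inE eqxx.
have y_left : y \notin x :: t1 by apply: sep; rewrite !inE eqxx orbT.
have last_a := connect_along_path left_path b_left (mem_last x t1) a_in.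
have c_y := connect_along_path right_path b_right c_in (mem_head y t2).
apply: (neighbours_separated (z := b) (r1 := last x t1) (r2 := y)).
- by rewrite e_sym.
- exact: by_edge.
- by apply: contraNneq y_left => <-; apply: mem_last.
- exact: connect_trans last_a (connect_trans ac c_y).
Qed.

Lemma inner_vertex_separates s a b c :
  is_path e s -> b \in s -> c \in s -> index a s < index b s < index c s ->
  ~ connect (del_vertex e b) a c.
Proof.
move=> s_path b_in; case/splitPr: b_in s_path => s1 s2 s_path c_in /andP[ab bc].
have b_s1 : b \notin s1.
  have : uniq (s1 ++ b :: s2) by case: s_path => ? [? [-> []]].
  by rewrite cat_uniq => /and3P[_ /hasPn/(_ b (mem_head b s2))].
apply: (cut_vertex_separates s_path).
  by apply: contraTT ab; rewrite index_pivot // index_cat => /negbTE->; rewrite -leqNgt leq_addr.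
move: c_in bc; rewrite index_pivot // mem_cat inE index_cat.
case: ifP => [c_s1 _ | _ /predU1P[-> | //]].
  by rewrite ltnNge ltnW // index_mem.
by rewrite /= eqxx addn0 ltnn.
Qed.

Lemma middle_vertex_separates s a b c :
  is_path e s -> a \in s -> b \in s -> c \in s -> a != b -> b != c -> a != c ->
  [\/ ~ connect (del_vertex e a) b c, ~ connect (del_vertex e b) a c
    | ~ connect (del_vertex e c) a b].
Proof.
move=> s_path a_in b_in c_in ab bc ac.
have between x y z : x \in s -> y \in s -> z \in s ->
    (index x s < index y s < index z s) || (index z s < index y s < index x s) ->
    ~ connect (del_vertex e y) x z.
  move=> x_in y_in z_in /orP[xyz | zyx]; first exact: inner_vertex_separates xyz.
  by rewrite del_vertex_connect_sym; apply: inner_vertex_separates zyx.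
have index_neq x y : x \in s -> y \in s -> x != y -> index x s != index y s.
  by move=> x_in y_in; apply: contra => /eqP ixy; rewrite -(nth_index x x_in) ixy nth_index.
move: (index_neq _ _ a_in b_in ab) (index_neq _ _ b_in c_in bc) (index_neq _ _ a_in c_in ac).
case: (ltngtP (index a s) (index b s)) => // hab _;
case: (ltngtP (index b s) (index c s)) => // hbc _;
case: (ltngtP (index a s) (index c s)) => // hac _.
all: first [ exfalso; lia
           | by apply: Or31; apply: between => //; lia
           | by apply: Or32; apply: between => //; lia
           | by apply: Or33; apply: between => //; lia ].
Qed.

End TreeSeparation.

(* The neighbour of q whose component of e - q contains x (q if none). *)
Definition branch_towards (W : finType) (e : rel W) (q x : W) : W :=
  odflt q [pick r | e q r && connect (del_vertex e q) r x].

(* In a connected graph every x <> q has such a neighbour: the second vertex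
   of a shortest walk from q to x. *)
Lemma branch_towardsP (W : finType) (e : rel W) (q x : W) :
  connected_graph e -> x != q ->
  e q (branch_towards e q x) && connect (del_vertex e q) (branch_towards e q x) x.
Proof.
move=> e_conn xq; rewrite /branch_towards; case: pickP => [r //|no_branch].
case/connectP: (e_conn q x) => p0 p0_path p0_last.
case/shortenP: p0_path p0_last => [[|r p] qp /andP[q_out _] _ /= p_last].
  by rewrite p_last eqxx in xq.
case/andP: qp => eqr rp.
have /negP[] := no_branch r; rewrite eqr /=.
by apply/connectP; exists p => //; apply: path_del_vertex.
Qed.

Section BranchesOfVPT.

Variables (V W : finType) (eG : rel V) (eT : rel W) (P : V -> seq W) (q : W).
Hypothesis eT_sym : symmetric eT.
Hypothesis eT_conn : connected_graph eT.
Hypothesis eT_acyc : acyclic eT.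
Hypothesis P_path : forall v, is_path eT (P v).
Hypothesis adjP :
  forall v v', v != v' -> (eG v v' <-> exists x, (x \in P v) && (x \in P v')).

Lemma nonadj_disjoint u u' x : u != u' -> ~~ eG u u' -> x \in P u -> x \notin P u'.
Proof.
move=> uu' /negP nadj xu; apply/negP => xu'.
by apply: nadj; apply/(adjP uu'); exists x; rewrite xu xu'.
Qed.

Lemma adj_meet u u' : u != u' -> eG u u' -> exists2 x, x \in P u & x \in P u'.
Proof. by move=> uu' /(adjP uu')[x /andP[]]; exists x. Qed.

Lemma reach_avoiding u w y b :
  q \in P u -> u != w -> eG u w -> y \notin P u -> y \notin P w -> b \in P w ->
  connect (del_vertex eT y) q b.
Proof.
move=> qu uw euw yu yw bw; have [x xu xw] := adj_meet uw euw.
apply: connect_trans (connect_along_is_path eT_sym (P_path u) yu qu xu) _.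
exact: (connect_along_is_path eT_sym (P_path w) yw xw bw).
Qed.

Lemma branch_adj_separated v w a b :
  branch_adj eG (Cq P q) v w -> a \in P v -> b \in P w ->
  ~ connect (del_vertex eT q) a b.
Proof.
case/and5P=> /andP[v_out _] /andP[w_out _] nvw /existsP[c /and3P[c_in ecv ecw]].
case/andP=> /existsP[v' /and3P[v'_in ev'v nv'w]] /existsP[w' /and3P[w'_in ew'w nw'v]].
move=> av bw ab; rewrite /Cq !inE in v_out w_out c_in v'_in w'_in.
have neq u u' : q \in P u -> q \notin P u' -> u != u'.
  by move=> qu; apply: contraNneq => <-.
have vw : v != w by apply: contraNneq nv'w => <-.
have [yv ycv yvv] := adj_meet (neq _ _ c_in v_out) ecv.
have [yw ycw yww] := adj_meet (neq _ _ c_in w_out) ecw.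
have yvw : yv \notin P w := nonadj_disjoint vw nvw yvv.
have ywv : yw \notin P v by apply: contraL yww; apply: nonadj_disjoint.
have yvw' : yv \notin P w'.
  by apply: contraL yvv; apply: nonadj_disjoint nw'v; apply: neq.
have ywv' : yw \notin P v'.
  by apply: contraL yww; apply: nonadj_disjoint nv'w; apply: neq.
have q_yv : q != yv by apply: contraNneq v_out => ->.
have q_yw : q != yw by apply: contraNneq w_out => ->.
have yv_yw : yv != yw by apply: contraNneq yvw => ->.
case: (middle_vertex_separates eT_sym eT_acyc (P_path c) c_in ycv ycw q_yv yv_yw q_yw).
- apply; apply: connect_trans (connect_along_is_path eT_sym (P_path v) v_out yvv av) _.
  exact: connect_trans ab (connect_along_is_path eT_sym (P_path w) w_out bw yww).
- by apply; apply: (reach_avoiding w'_in (neq _ _ w'_in w_out) ew'w).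
- by apply; apply: (reach_avoiding v'_in (neq _ _ v'_in v_out) ev'v).
Qed.

Definition branch_color (v : V) : nat :=
  index (branch_towards eT q (head q (P v))) (enum [set r | eT q r]).

Lemma branch_of_head v :
  q \notin P v -> let r := branch_towards eT q (head q (P v)) in
  eT q r && connect (del_vertex eT q) r (head q (P v)).
Proof.
move=> v_out; apply: branch_towardsP => //.
by apply: contraNneq v_out => <-; apply: head_is_path_mem.
Qed.

Lemma branch_color_lt v : q \notin P v -> branch_color v < degree eT q.
Proof.
move=> /branch_of_head /andP[qr _].
by rewrite /degree cardE /branch_color index_mem mem_enum inE.
Qed.

Lemma branch_color_proper v w :
  branch_adj eG (Cq P q) v w -> branch_color v != branch_color w.
Proof.
move=> vw_adj; have /and3P[/andP[v_out _] /andP[w_out _] _] := vw_adj.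
rewrite /Cq !inE in v_out w_out.
have /andP[qrv rv_hv] := branch_of_head v_out.
have /andP[qrw rw_hw] := branch_of_head w_out.
apply/negP => /eqP same_color.
have same_branch : branch_towards eT q (head q (P v)) = branch_towards eT q (head q (P w)).
  by move: (congr1 (nth q (enum [set r | eT q r])) same_color);
     rewrite /branch_color !nth_index ?mem_enum ?inE.
apply: (branch_adj_separated vw_adj (head_is_path_mem q (P_path v))
                                    (head_is_path_mem q (P_path w))).
rewrite del_vertex_connect_sym // in rv_hv.
by apply: connect_trans rv_hv _; rewrite same_branch.
Qed.

End BranchesOfVPT.

Theorem mainTheorem2 (V W : finType) (eG : rel V) (eT : rel W)
  (P : V -> seq W) (C : {set V}) (q : W) (h : nat) :
  graph eG -> VPT_rep eG eT P -> clique eG C -> C = Cq P q ->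
  degree eT q = h -> branch_colorable eG C h.
Proof.
move=> _ [[[[eT_sym _] eT_conn] eT_acyc] [P_path adjP]] _ -> <-.
exists (branch_color eT P q); split.
- by move=> v /andP[v_out _]; apply: branch_color_lt; rewrite /Cq inE in v_out.
- by move=> v w; apply: (branch_color_proper eT_sym eT_conn eT_acyc P_path adjP).
Qed.
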